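(* VD satisfies stability: for every finite candidate set $C$, every profile $P$ over $C$ and every ballot $A\subseteq C$, $\mathrm{VD}(P)\cap\mathrm{VD}(P+\{A\})\neq\emptyset$. In contrast, for each $f\in\{\mathrm{MF},\mathrm{BC},\mathrm{MS},\mathrm{FT}\}$ there exist a finite candidate set $C$, a profile $P$ and a ballot $A$ over $C$ with $f(P)\cap f(P+\{A\})=\emptyset$.
   Context: Let $C$ be a finite set of candidates. An approval ballot is a nonempty subset $A\subseteq C$; a profile is a finite sequence of ballots; $P+\{A\}$ is $P$ with the ballot $A$ appended. An axis is a strict linear order $\triangleleft$ on $C$; $a\trianglelefteq b$ means $a\triangleleft b$ or $a=b$. A ballot $A$ is an interval of $\triangleleft$ if for all $a,b\in A$ and every $c$ with $a\triangleleft c\triangleleft b$ we have $c\in A$. For a cost function $\mathrm{cost}_f$, the associated scoring rule returns $f(P)=\arg\min_{\triangleleft}\sum_{A\in P}\mathrm{cost}_f(A,\triangleleft)$ over all axes on $C$. The five rules VD, MF, BC, MS, FT are the scoring rules with costs: $\mathrm{cost}_{\mathrm{VD}}(A,\triangleleft)=0$ if $A$ is an interval of $\triangleleft$ and $1$ otherwise; $\mathrm{cost}_{\mathrm{MF}}(A,\triangleleft)=\min_{x,y\in A,\ x\trianglelefteq y}\big(|\{z\in A: z\triangleleft x \text{ or } y\triangleleft z\}|+|\{z\notin A: x\triangleleft z\triangleleft y\}|\big)$; $\mathrm{cost}_{\mathrm{BC}}(A,\triangleleft)=|\{b\notin A: a\triangleleft b\triangleleft c \text{ for some } a,c\in A\}|$;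 $\mathrm{cost}_{\mathrm{MS}}(A,\triangleleft)=\sum_{x\in C\setminus A}\min\big(|\{y\in A:y\triangleleft x\}|,\,|\{y\in A:x\triangleleft y\}|\big)$; $\mathrm{cost}_{\mathrm{FT}}(A,\triangleleft)=\sum_{x\in C\setminus A}|\{y\in A:y\triangleleft x\}|\cdot|\{y\in A:x\triangleleft y\}|$. *)

From mathcomp Require Import all_boot.
Set Implicit Arguments. Unset Strict Implicit. Unset Printing Implicit Defensive.

Definition is_axis (C : finType) (lt : rel C) : Prop :=
  (forall x, ~~ lt x x) /\
  (forall x y z, lt x y -> lt y z -> lt x z) /\
  (forall x y, x != y -> lt x y || lt y x).

Definition axle (C : finType) (lt : rel C) (a b : C) : bool := lt a b || (a == b).

Definition ballot (C : finType) (A : {set C}) : Prop := A != set0.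
Definition profile (C : finType) (P : seq {set C}) : Prop := all (fun A => A != set0) P.

Definition is_interval (C : finType) (A : {set C}) (lt : rel C) : bool :=
  [forall a in A, forall b in A, forall c, (lt a c && lt c b) ==> (c \in A)].

Definition cost_VD (C : finType) (A : {set C}) (lt : rel C) : nat :=
  if is_interval A lt then 0 else 1.

(* min over x,y in A with x <|= y; each term is <= #|C| (it counts two disjoint
   subsets of C), so #|C| is a neutral starting value for the minimum. *)
Definition cost_MF (C : finType) (A : {set C}) (lt : rel C) : nat :=
  \big[minn/#|C|]_(x in A) \big[minn/#|C|]_(y in A | axle lt x y)
     (#|[set z in A | lt z x || lt y z]| + #|[set z in ~: A | lt x z && lt z y]|).

Definition cost_BC (C : finType) (A : {set C}) (lt : rel C) : nat :=
  #|[set b in ~: A | [exists a in A, exists c in A, lt a b && lt b c]]|.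

Definition cost_MS (C : finType) (A : {set C}) (lt : rel C) : nat :=
  \sum_(x in ~: A) minn #|[set y in A | lt y x]| #|[set y in A | lt x y]|.

Definition cost_FT (C : finType) (A : {set C}) (lt : rel C) : nat :=
  \sum_(x in ~: A) (#|[set y in A | lt y x]| * #|[set y in A | lt x y]|).

Definition total_cost (C : finType) (cost : {set C} -> rel C -> nat)
  (P : seq {set C}) (lt : rel C) : nat := \sum_(A <- P) cost A lt.

Definition in_rule (C : finType) (cost : {set C} -> rel C -> nat)
  (P : seq {set C}) (lt : rel C) : Prop :=
  is_axis lt /\ forall lt', is_axis lt' -> total_cost cost P lt <= total_cost cost P lt'.

Definition stable_instance (C : finType) (cost : {set C} -> rel C -> nat)
  (P : seq {set C}) (A : {set C}) : Prop :=
  exists lt, in_rule cost P lt /\ in_rule cost (rcons P A) lt.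

From mathcomp Require Import all_boot.
From mathcomp Require Import zify.
From Stdlib Require Import Classical FunctionalExtensionality.
Set Implicit Arguments. Unset Strict Implicit. Unset Printing Implicit Defensive.

(* Stability of VD: minimise [2 * cost(P) + cost(A)] over all axes.  Since the
   VD cost of a single ballot is 0 or 1, the doubled weight makes [P] the
   primary criterion and [A] only breaks ties, so a minimiser is optimal both
   for [P] and for [P + {A}].

   An axis on ['I_n] is the same as a permutation of [0 .. n-1],
   so each counterexample is checked by enumerating all permutations, after
   rewriting the costs into functions on sequences that evaluate by
   computation. *)

Lemma exists_argmin (T : Type) (Q : T -> Prop) (f : T -> nat) :
  (exists x, Q x) -> exists2 x, Q x & forall y, Q y -> f x <= f y.
Proof.
move=> [x0 Qx0]; move: {2}(f x0) (erefl (f x0)) => m.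
elim/ltn_ind: m x0 Qx0 => m IH x Qx fx.
case: (classic (exists2 y, Q y & f y < f x)) => [[y Qy fyx]|no_smaller].
  by apply: (IH (f y) _ y); rewrite -?fx.
exists x => // y Qy; rewrite leqNgt; apply/negP=> fyx; apply: no_smaller.
by exists y.
Qed.

Lemma exists_axis (C : finType) : exists lt : rel C, is_axis lt.
Proof.
exists (fun x y => enum_rank x < enum_rank y).
split; first by move=> x; rewrite ltnn.
split; first by move=> x y z; apply: ltn_trans.
move=> x y; rewrite -neq_ltn; apply: contra => /eqP ranks_eq.
by apply/eqP/enum_rank_inj/val_inj.
Qed.

Lemma total_cost_rcons (C : finType) cost (P : seq {set C}) A lt :
  total_cost cost (rcons P A) lt = total_cost cost P lt + cost A lt.
Proof. by rewrite /total_cost -cats1 big_cat big_seq1. Qed.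

Lemma stable_of_cost_le1 (C : finType) (cost : {set C} -> rel C -> nat) P A :
  (forall lt, is_axis lt -> cost A lt <= 1) -> stable_instance cost P A.
Proof.
move=> cost_le1.
have [lt ax_lt lt_min] := exists_argmin
  (fun lt => 2 * total_cost cost P lt + cost A lt) (exists_axis C).
exists lt; split; split=> // lt' ax_lt'; have := lt_min _ ax_lt';
  have := cost_le1 _ ax_lt; have := cost_le1 _ ax_lt';
  rewrite ?total_cost_rcons; lia.
Qed.

Lemma cost_VD_le1 (C : finType) (A : {set C}) lt : cost_VD A lt <= 1.
Proof. by rewrite /cost_VD; case: ifP. Qed.

Lemma VD_stable (C : finType) (P : seq {set C}) A : stable_instance (@cost_VD C) P A.
Proof. by apply: stable_of_cost_le1 => lt _; apply: cost_VD_le1. Qed.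

Definition seq_axis n (p : seq nat) : rel 'I_n :=
  fun x y => index (val x) p < index (val y) p.

Definition seq_ballot n (a : seq nat) : {set 'I_n} := [set x | val x \in a].

Definition perms n := permutations (iota 0 n).

Arguments seq_axis : clear implicits.
Arguments seq_ballot : clear implicits.

Lemma seq_axis_is_axis n p : p \in perms n -> is_axis (seq_axis n p).
Proof.
rewrite mem_permutations => /perm_mem p_iota.
have mem_p (x : 'I_n) : val x \in p by rewrite p_iota mem_iota add0n ltn_ord.
split; first by move=> x; rewrite /seq_axis ltnn.
split; first by move=> x y z; apply: ltn_trans.
move=> x y; rewrite /seq_axis -neq_ltn; apply: contra => /eqP indices_eq.
exact/eqP/val_inj/(index_inj 0 (mem_p x) (mem_p y)).
Qed.

Lemma axis_is_seq_axis n (lt : rel 'I_n) :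
  is_axis lt -> exists2 p, p \in perms n & lt = seq_axis n p.
Proof.
move=> [irr [trans tot]].
have le_total : total (axle lt).
  move=> x y; rewrite /axle; case: (eqVneq x y) => [->|/tot]; first by rewrite !orbT.
  by case/orP=> ->; rewrite ?orbT.
have le_trans : transitive (axle lt).
  move=> y x z; rewrite /axle => /orP[xy|/eqP->] /orP[yz|/eqP<-];
  by rewrite ?(trans _ _ _ xy yz) ?xy ?yz ?eqxx ?orbT.
set s := sort (axle lt) (enum 'I_n).
have s_sorted : sorted (axle lt) s by apply: sort_sorted; exact: le_total.
have s_all x : x \in s by rewrite mem_sort mem_enum.
have lt_of_index x y : index x s < index y s -> lt x y.
  move=> ixy; have := sorted_ltn_index le_trans s_sorted _ _ (s_all x) (s_all y) ixy.
  by case/orP=> // /eqP exy; move: ixy; rewrite exy ltnn.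
exists (map val s).
  by rewrite mem_permutations -val_enum_ord perm_map // perm_sort.
apply: functional_extensionality => x; apply: functional_extensionality => y.
rewrite /seq_axis !(index_map val_inj).
apply/idP/idP=> [xy|]; last exact: lt_of_index.
rewrite ltnNge leq_eqVlt; apply/negP => /orP[/eqP ixy|/lt_of_index yx].
  have exy : x = y by rewrite -(nth_index x (s_all x)) -ixy nth_index.
  by move: xy; rewrite exy (negbTE (irr y)).
by move: (irr x); rewrite (trans _ _ _ xy yx).
Qed.

Lemma big_ord_nat (R : Type) (op : R -> R -> R) idx n (P : pred 'I_n) (Q : pred nat)
    (F : 'I_n -> R) (G : nat -> R) :
  (forall x, P x = Q (val x)) -> (forall x, Q (val x) -> F x = G (val x)) ->
  \big[op/idx]_(x | P x) F x = \big[op/idx]_(0 <= i < n | Q i) G i.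
Proof.
move=> PQ FG; rewrite big_mkord; apply: eq_big => x; first exact: PQ.
by rewrite PQ; apply: FG.
Qed.

Lemma card_ord_count n (S : {set 'I_n}) (Q : pred nat) :
  (forall z, (z \in S) = Q (val z)) -> #|S| = count Q (iota 0 n).
Proof.
move=> SQ; rewrite -sum1_card -sum1_count.
have -> : iota 0 n = index_iota 0 n by rewrite /index_iota subn0.
exact: big_ord_nat.
Qed.

Lemma existsb_ord_has n (Q : pred nat) : [exists z : 'I_n, Q (val z)] = has Q (iota 0 n).
Proof.
apply/existsP/hasP => [[z Qz]|[i]].
  by exists (val z); rewrite // mem_iota add0n ltn_ord.
by rewrite mem_iota add0n => i_lt_n Qi; exists (Ordinal i_lt_n).
Qed.

Section SeqCosts.

Variables (n : nat) (a p : seq nat).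

Let before x y := index x p < index y p.
Let below x := count (fun y => (y \in a) && before y x) (iota 0 n).
Let above x := count (fun y => (y \in a) && before x y) (iota 0 n).

Definition seq_cost_MF :=
  \big[minn/n]_(0 <= x < n | x \in a)
    \big[minn/n]_(0 <= y < n | (y \in a) && (before x y || (x == y)))
      (count (fun z => (z \in a) && (before z x || before y z)) (iota 0 n) +
       count (fun z => (z \notin a) && before x z && before z y) (iota 0 n)).

Definition seq_cost_BC :=
  count (fun b => (b \notin a) &&
    has (fun x => (x \in a) &&
      has (fun z => (z \in a) && before x b && before b z) (iota 0 n)) (iota 0 n))
    (iota 0 n).

Definition seq_cost_MS := \sum_(0 <= x < n | x \notin a) minn (below x) (above x).

Definition seq_cost_FT := \sum_(0 <= x < n | x \notin a) below x * above x.

Lemma seq_cost_MFE : cost_MF (seq_ballot n a) (seq_axis n p) = seq_cost_MF.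
Proof.
rewrite /cost_MF card_ord; apply: big_ord_nat => [x|x _]; first by rewrite inE.
apply: big_ord_nat => [y|y _]; first by rewrite inE /axle.
by congr addn; apply: card_ord_count => z; rewrite !inE ?andbA.
Qed.

Lemma seq_cost_BCE : cost_BC (seq_ballot n a) (seq_axis n p) = seq_cost_BC.
Proof.
apply: card_ord_count => z; rewrite !inE; congr andb.
rewrite -existsb_ord_has; apply: eq_existsb => x; rewrite inE -existsb_ord_has.
by congr andb; apply: eq_existsb => y; rewrite inE andbA.
Qed.

Lemma seq_cost_MSE : cost_MS (seq_ballot n a) (seq_axis n p) = seq_cost_MS.
Proof.
apply: big_ord_nat => [x|x _]; first by rewrite !inE.
by congr minn; apply: card_ord_count => z; rewrite !inE.
Qed.

Lemma seq_cost_FTE : cost_FT (seq_ballot n a) (seq_axis n p) = seq_cost_FT.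
Proof.
apply: big_ord_nat => [x|x _]; first by rewrite !inE.
by congr muln; apply: card_ord_count => z; rewrite !inE.
Qed.

End SeqCosts.

Section Certificate.

Variables (n : nat) (cost : {set 'I_n} -> rel 'I_n -> nat).
Variable seq_cost : seq nat -> seq nat -> nat.
Hypothesis seq_costE : forall a p, cost (seq_ballot n a) (seq_axis n p) = seq_cost a p.

Let seq_total (As : seq (seq nat)) p := \sum_(b <- As) seq_cost b p.

Definition unstable_certificate (As : seq (seq nat)) (a p1 p2 : seq nat) : bool :=
  [&& all (has (fun i => i < n)) (a :: As), p1 \in perms n, p2 \in perms n &
      all (fun q => (seq_total As p1 < seq_total As q) ||
                    (seq_total (rcons As a) p2 < seq_total (rcons As a) q)) (perms n)].

Lemma total_cost_seq_ballot (As : seq (seq nat)) p :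
  total_cost cost (map (seq_ballot n) As) (seq_axis n p) = seq_total As p.
Proof. by rewrite /total_cost big_map; apply: eq_bigr => b _; apply: seq_costE. Qed.

Lemma seq_ballot_neq0 (a : seq nat) : has (fun i => i < n) a -> seq_ballot n a != set0.
Proof. by case/hasP=> i ai i_lt_n; apply/set0Pn; exists (Ordinal i_lt_n); rewrite inE. Qed.

Lemma unstable_of_certificate As a p1 p2 :
  unstable_certificate As a p1 p2 ->
  let P := map (seq_ballot n) As in let A := seq_ballot n a in
  profile P /\ ballot A /\ ~ stable_instance cost P A.
Proof.
case/and4P=> /= /andP[a_ne As_ne] p1_perm p2_perm /allP beaten.
split; first by rewrite /profile all_map; apply: sub_all As_ne => b; apply: seq_ballot_neq0.
split; first exact: seq_ballot_neq0.
move=> [lt [[ax_lt lt_opt] [_ lt_opt']]].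
have [q q_perm lt_q] := axis_is_seq_axis ax_lt.
move: (lt_opt _ (seq_axis_is_axis p1_perm)) (lt_opt' _ (seq_axis_is_axis p2_perm)).
rewrite lt_q -map_rcons !total_cost_seq_ballot.
by case/orP: (beaten q q_perm); lia.
Qed.

End Certificate.

Ltac check_certificate :=
  rewrite /unstable_certificate /seq_cost_MF /seq_cost_BC /seq_cost_MS /seq_cost_FT
    unlock; vm_compute; reflexivity.

Theorem mainTheorem5 :
  (forall (C : finType) (P : seq {set C}) (A : {set C}),
      profile P -> ballot A -> stable_instance (@cost_VD C) P A) /\
  (exists (C : finType) (P : seq {set C}) (A : {set C}),
      profile P /\ ballot A /\ ~ stable_instance (@cost_MF C) P A) /\
  (exists (C : finType) (P : seq {set C}) (A : {set C}),
      profile P /\ ballot A /\ ~ stable_instance (@cost_BC C) P A) /\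
  (exists (C : finType) (P : seq {set C}) (A : {set C}),
      profile P /\ ballot A /\ ~ stable_instance (@cost_MS C) P A) /\
  (exists (C : finType) (P : seq {set C}) (A : {set C}),
      profile P /\ ballot A /\ ~ stable_instance (@cost_FT C) P A).
Proof.
split; first by move=> C P A _ _; apply: VD_stable.
split.
  do 3 eexists; apply: (@unstable_of_certificate 5 _ _ (@seq_cost_MFE 5)
    [:: [:: 0; 3]; [:: 1; 2; 3]; [:: 1; 3]; [:: 1; 2; 3; 4]] [:: 0; 1; 4]
    [:: 0; 3; 1; 2; 4] [:: 0; 4; 1; 3; 2]).
  by check_certificate.
split.
  do 3 eexists; apply: (@unstable_of_certificate 4 _ _ (@seq_cost_BCE 4)
    [:: [:: 0; 2; 3]; [:: 0; 1; 2]] [:: 1; 3] [:: 1; 0; 2; 3] [:: 0; 2; 1; 3]).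
  by check_certificate.
split.
  do 3 eexists; apply: (@unstable_of_certificate 4 _ _ (@seq_cost_MSE 4)
    [:: [:: 0; 1; 2]; [:: 0; 1; 3]] [:: 2; 3] [:: 2; 0; 1; 3] [:: 0; 1; 2; 3]).
  by check_certificate.
do 3 eexists; apply: (@unstable_of_certificate 4 _ _ (@seq_cost_FTE 4)
  [:: [:: 1; 3]; [:: 0; 1]] [:: 0; 2; 3] [:: 0; 1; 3; 2] [:: 1; 0; 3; 2]).
by check_certificate.
Qed.
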